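(* If a link $L\subset\mathbb{R}^3$ has thickness $\tau>0$, then its secant map $S$ has Lipschitz constant $1/(2\tau)$ on $(L\times L)\setminus\Delta$. Consequently $L$ is $C^{1,1}$.
   Context: A link is a disjoint union of finitely many simple closed curves in $\mathbb{R}^3$. For distinct $x,y,z\in\mathbb{R}^3$, $r(x,y,z)$ is the radius of the circle through them ($\infty$ if collinear); the thickness is $\tau(L)=\inf r(x,y,z)$ over pairwise distinct $x,y,z\in L$. The secant map is $S(x,y)=\pm\frac{x-y}{|x-y|}\in\mathbb{R}P^2$ for $x\neq y\in L$; $\Delta$ is the diagonal of $L\times L$. Metrics: on $L\times L$, the sum of the (shorter) arclength distances in the two factors; on $\mathbb{R}P^2$, the distance between two points is $\sin\theta$, where $\theta$ is the angle between lifts of the points to $S^2$. $C^{1,1}$ is with respect to the constant-speed parametrization. *)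

From Stdlib Require Import Reals Lra.
From Coquelicot Require Import Coquelicot.
Open Scope R_scope.

Definition point := (R * R * R)%type.
Definition px (p : point) : R := fst (fst p).
Definition py (p : point) : R := snd (fst p).
Definition pz (p : point) : R := snd p.
Definition vsub (p q : point) : point := (px p - px q, py p - py q, pz p - pz q).
Definition vdot (p q : point) : R := px p * px q + py p * py q + pz p * pz q.
Definition vnorm (p : point) : R := sqrt (vdot p p).
Definition vdist (p q : point) : R := vnorm (vsub p q).
Definition vcross (p q : point) : point :=
  (py p * pz q - pz p * py q, pz p * px q - px p * pz q, px p * py q - py p * px q).
Definition vscale (a : R) (p : point) : point := (a * px p, a * py p, a * pz p).

(** A link with [n] components: component [i < n] is the image of a
    continuous 1-periodic map [g i : R -> R^3] which is injective on [0,1)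
    (a simple closed curve); distinct components are disjoint. *)
Definition is_link (n : nat) (g : nat -> R -> point) : Prop :=
  (forall i, (i < n)%nat ->
     (forall t, continuity_pt (fun u => px (g i u)) t /\
                continuity_pt (fun u => py (g i u)) t /\
                continuity_pt (fun u => pz (g i u)) t) /\
     (forall t, g i (t + 1) = g i t) /\
     (forall s t, 0 <= s < 1 -> 0 <= t < 1 -> g i s = g i t -> s = t)) /\
  (forall i j s t, (i < n)%nat -> (j < n)%nat -> i <> j -> g i s <> g j t).

Definition on_link (n : nat) (g : nat -> R -> point) (x : point) : Prop :=
  exists i s, (i < n)%nat /\ x = g i s.

Definition circumradius (x y z : point) : Rbar :=
  let c := vnorm (vcross (vsub y x) (vsub z x)) in
  if Req_EM_T c 0 then p_infty
  else Finite (vdist x y * vdist y z * vdist z x / (2 * c)).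

Definition thickness (n : nat) (g : nat -> R -> point) : Rbar :=
  Glb_Rbar (fun r : R => exists x y z,
     on_link n g x /\ on_link n g y /\ on_link n g z /\
     x <> y /\ y <> z /\ x <> z /\ circumradius x y z = Finite r).
(* Note: Glb_Rbar over reals; collinear triples contribute +oo, which does
   not affect the infimum (and the infimum is +oo if all are collinear). *)

Fixpoint psum (h : nat -> R) (k : nat) : R :=
  match k with O => 0 | S k' => psum h k' + h k' end.

Definition polygon_length (f : R -> point) (a b : R) (v : R) : Prop :=
  exists (k : nat) (p : nat -> R),
    p O = a /\ p k = b /\ (forall j, (j < k)%nat -> p j <= p (S j)) /\
    v = psum (fun j => vdist (f (p j)) (f (p (S j)))) k.

Definition arclength (f : R -> point) (a b : R) : Rbar :=
  Lub_Rbar (polygon_length f a b).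

(** Shorter arclength distance between the points with parameters s,t in [0,1)
    of the closed curve f (1-periodic). *)
Definition arc_dist (f : R -> point) (s t : R) : Rbar :=
  Rbar_min (arclength f (Rmin s t) (Rmax s t))
           (arclength f (Rmax s t) (Rmin s t + 1)).

(** Secant map S(x,y) = +-(x-y)/|x-y| in RP^2 (a unit lift), and the
    RP^2 distance sin(theta), theta the angle between lifts. *)
Definition secant (x y : point) : point := vscale (/ vdist x y) (vsub x y).
Definition rp2_dist (u v : point) : R := sin (acos (vdot u v)).

(** C^{1,1} with respect to a constant-speed parametrization, for component i. *)
Definition component_C11 (f : R -> point) : Prop :=
  exists (c c' : R -> point),
    (forall t, c (t + 1) = c t) /\
    (forall s t, 0 <= s < 1 -> 0 <= t < 1 -> c s = c t -> s = t) /\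
    (forall x, (exists s, x = f s) <-> (exists t, x = c t)) /\
    (forall t, is_derive (fun u => px (c u)) t (px (c' t)) /\
               is_derive (fun u => py (c u)) t (py (c' t)) /\
               is_derive (fun u => pz (c u)) t (pz (c' t))) /\
    (exists v, forall t, vnorm (c' t) = v) /\
    (exists K, forall s t, vdist (c' s) (c' t) <= K * Rabs (s - t)).

(* Positive thickness [tau] means that every triple of points of the link has
   circumradius at least [tau]; equivalently the angle at [y] between the
   chords [yx] and [yz] has sine at most |x - z| / (2 tau).  The sine of the
   angle between lines is the metric of RP^2 and satisfies the triangle
   inequality, so moving one endpoint of a secant at a time bounds the
   RP^2-distance of S(x,y) and S(x',y') by (|x - x'| + |y - y'|) / (2 tau),
   and chords are shorter than arcs.

   For C^{1,1}, apply the same bound on an arc whose points lie within [eta] of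
   both ends, [eta < tau]: every subchord makes an angle of sine at most
   [eta / tau] with the full chord, and since their dot product never vanishes,
   connectedness forces it to be positive.  Summing, an inscribed polygon is at
   most [chord / (1 - (eta/tau)^2)] long, so each component is rectifiable and
   an arc of length [l < tau] has chord at least [(1 - (l/tau)^2) l].  For the
   constant-speed reparametrization all difference quotients over a window of
   width [w] then lie within O(w) of each other: they converge to a derivative
   of constant norm which is Lipschitz. *)

From Stdlib Require Import Reals Lra Psatz Classical ClassicalEpsilon List.
From Coquelicot Require Import Coquelicot.
Open Scope R_scope.

(** * Vectors in R^3 *)

Definition vadd (p q : point) : point := (px p + px q, py p + py q, pz p + pz q).

Ltac vec_simpl := unfold vadd, vsub, vscale, vcross, vdot, px, py, pz; simpl.
Ltac vec_ring := vec_simpl; repeat (apply injective_projections; simpl); ring.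

Lemma vdot_self_ge0 a : 0 <= vdot a a.
Proof. vec_simpl; nra. Qed.

Lemma vnorm_ge0 a : 0 <= vnorm a.
Proof. apply sqrt_pos. Qed.

Lemma vnorm_0 : vnorm (0, 0, 0) = 0.
Proof. unfold vnorm, vdot, px, py, pz; simpl. rewrite Rmult_0_l, !Rplus_0_r. apply sqrt_0. Qed.

Lemma vnorm_sq a : vnorm a * vnorm a = vdot a a.
Proof. apply sqrt_sqrt, vdot_self_ge0. Qed.

Lemma le_of_sq_le x y : 0 <= y -> x * x <= y * y -> x <= y.
Proof. nra. Qed.

Lemma lagrange_identity a b :
  vdot (vcross a b) (vcross a b) + vdot a b * vdot a b = vdot a a * vdot b b.
Proof. vec_simpl; ring. Qed.

Lemma lagrange_vnorm a b :
  vnorm (vcross a b) * vnorm (vcross a b) + vdot a b * vdot a b =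
  (vnorm a * vnorm b) * (vnorm a * vnorm b).
Proof.
  replace (vnorm a * vnorm b * (vnorm a * vnorm b)) with (vnorm a * vnorm a * (vnorm b * vnorm b))
    by ring.
  rewrite !vnorm_sq. apply lagrange_identity.
Qed.

Lemma vdot_cauchy_schwarz a b : Rabs (vdot a b) <= vnorm a * vnorm b.
Proof.
  pose proof (vnorm_ge0 a); pose proof (vnorm_ge0 b).
  pose proof (lagrange_vnorm a b); pose proof (vnorm_ge0 (vcross a b)).
  apply le_of_sq_le; [nra|].
  rewrite <- Rabs_mult, Rabs_pos_eq by nra. nra.
Qed.

Lemma vcross_norm_le a b : vnorm (vcross a b) <= vnorm a * vnorm b.
Proof.
  pose proof (vnorm_ge0 a); pose proof (vnorm_ge0 b); pose proof (lagrange_vnorm a b).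
  apply le_of_sq_le; nra.
Qed.

Lemma vnorm_triangle a b : vnorm (vadd a b) <= vnorm a + vnorm b.
Proof.
  pose proof (vnorm_ge0 a); pose proof (vnorm_ge0 b).
  pose proof (vdot_cauchy_schwarz a b); pose proof (Rle_abs (vdot a b)).
  apply le_of_sq_le; [lra|].
  assert (E : vdot (vadd a b) (vadd a b) = vdot a a + vdot b b + 2 * vdot a b) by (vec_simpl; ring).
  rewrite vnorm_sq, E, <- !vnorm_sq; nra.
Qed.

Lemma vnorm_scale c a : vnorm (vscale c a) = Rabs c * vnorm a.
Proof.
  unfold vnorm. rewrite <- sqrt_Rsqr_abs, <- sqrt_mult_alt by apply Rle_0_sqr.
  f_equal. unfold Rsqr. vec_simpl; ring.
Qed.

Lemma vnorm_eq0 a : vnorm a = 0 -> a = (0, 0, 0).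
Proof.
  intro H. assert (vdot a a = 0) by (rewrite <- vnorm_sq, H; ring).
  destruct a as [[a1 a2] a3]; unfold vdot, px, py, pz in *; simpl in *.
  assert (a1 = 0) by nra; assert (a2 = 0) by nra; assert (a3 = 0) by nra; subst; reflexivity.
Qed.

Lemma vnorm_vsub_comm x y : vnorm (vsub x y) = vnorm (vsub y x).
Proof. unfold vnorm; f_equal; vec_simpl; ring. Qed.

Lemma vcross_norm_comm a b : vnorm (vcross a b) = vnorm (vcross b a).
Proof. unfold vnorm; f_equal; vec_simpl; ring. Qed.

Lemma vdot_vsub_swap x y w : vdot (vsub x y) w = - vdot (vsub y x) w.
Proof. vec_simpl; ring. Qed.

Lemma vdot_scale a X b Y : vdot (vscale a X) (vscale b Y) = a * b * vdot X Y.
Proof. vec_simpl; ring. Qed.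

Lemma vnorm_vsub_sq X Y :
  vnorm (vsub X Y) * vnorm (vsub X Y) = vnorm X * vnorm X + vnorm Y * vnorm Y - 2 * vdot X Y.
Proof. rewrite !vnorm_sq. vec_simpl; ring. Qed.

Lemma vdist_sym x y : vdist x y = vdist y x.
Proof. apply vnorm_vsub_comm. Qed.

Lemma vdist_xx x : vdist x x = 0.
Proof. unfold vdist. replace (vsub x x) with (0, 0, 0) by vec_ring. apply vnorm_0. Qed.

Lemma vdist_gt0 x y : x <> y -> 0 < vdist x y.
Proof.
  intro Nxy. destruct (Rle_lt_or_eq_dec 0 (vdist x y) (vnorm_ge0 _)) as [|E]; auto.
  exfalso; apply Nxy. symmetry in E; apply vnorm_eq0 in E.
  transitivity (vadd (vsub x y) y); [vec_ring|]. rewrite E. vec_ring.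
Qed.

Lemma vdist_triangle x y z : vdist x z <= vdist x y + vdist y z.
Proof.
  unfold vdist. replace (vsub x z) with (vadd (vsub x y) (vsub y z)) by vec_ring.
  apply vnorm_triangle.
Qed.

Lemma vnorm_lipschitz X Y : Rabs (vnorm X - vnorm Y) <= vdist X Y.
Proof.
  pose proof (vnorm_triangle (vsub X Y) Y) as T1. pose proof (vnorm_triangle (vsub Y X) X) as T2.
  replace (vadd (vsub X Y) Y) with X in T1 by vec_ring.
  replace (vadd (vsub Y X) X) with Y in T2 by vec_ring.
  rewrite vnorm_vsub_comm in T2. unfold vdist. apply Rabs_le; split; lra.
Qed.

Lemma vdist_le_vnorm_add X Y : vdist X Y <= vnorm X + vnorm Y.
Proof.
  unfold vdist. replace (vsub X Y) with (vadd X (vscale (-1) Y)) by vec_ring.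
  eapply Rle_trans; [apply vnorm_triangle|]. rewrite vnorm_scale, Rabs_m1. lra.
Qed.

Lemma vnorm_le_l1 v : vnorm v <= Rabs (px v) + Rabs (py v) + Rabs (pz v).
Proof.
  pose proof (Rabs_pos (px v)); pose proof (Rabs_pos (py v)); pose proof (Rabs_pos (pz v)).
  apply le_of_sq_le; [lra|]. rewrite vnorm_sq.
  pose proof (Rsqr_abs (px v)); pose proof (Rsqr_abs (py v)); pose proof (Rsqr_abs (pz v)).
  unfold vdot, Rsqr in *; nra.
Qed.

Lemma coord_sub_le_vdist X Y : Rabs (px X - px Y) <= vdist X Y /\
  Rabs (py X - py Y) <= vdist X Y /\ Rabs (pz X - pz Y) <= vdist X Y.
Proof.
  unfold vdist, vnorm.
  replace (vdot (vsub X Y) (vsub X Y))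
    with ((px X - px Y)² + (py X - py Y)² + (pz X - pz Y)²) by (unfold Rsqr; vec_simpl; ring).
  pose proof (Rle_0_sqr (px X - px Y)); pose proof (Rle_0_sqr (py X - py Y)).
  pose proof (Rle_0_sqr (pz X - pz Y)).
  repeat split; rewrite <- sqrt_Rsqr_abs; apply sqrt_le_1_alt; lra.
Qed.

(* The sine of the angle between lines, |a x c| / (|a| |c|), satisfies the
   triangle inequality; this is its homogeneous form.  It follows from
   |b|^2 (a x c) = (b.c) (a x b) + a x (b x (c x b)). *)
Lemma vcross_triangle a b c :
  vnorm (vcross a c) * vnorm b <= vnorm (vcross a b) * vnorm c + vnorm (vcross b c) * vnorm a.
Proof.
  pose proof (vnorm_ge0 a); pose proof (vnorm_ge0 b); pose proof (vnorm_ge0 c).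
  pose proof (vnorm_ge0 (vcross a b)); pose proof (vnorm_ge0 (vcross a c)).
  pose proof (vnorm_ge0 (vcross b c)).
  destruct (Req_dec (vnorm b) 0) as [Hb|Hb]; [rewrite Hb; nra|].
  assert (E : vscale (vdot b b) (vcross a c) =
              vadd (vscale (vdot b c) (vcross a b)) (vcross a (vcross b (vcross c b))))
    by vec_ring.
  assert (Q1 : vnorm (vscale (vdot b c) (vcross a b)) <= vnorm b * vnorm c * vnorm (vcross a b)).
  { rewrite vnorm_scale. apply Rmult_le_compat_r; [lra|apply vdot_cauchy_schwarz]. }
  assert (Q2 : vnorm (vcross a (vcross b (vcross c b))) <= vnorm a * vnorm b * vnorm (vcross b c)).
  { eapply Rle_trans; [apply vcross_norm_le|]. rewrite Rmult_assoc.
    apply Rmult_le_compat_l; [lra|]. rewrite (vcross_norm_comm b c). apply vcross_norm_le. }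
  assert (Q : vnorm b * vnorm b * vnorm (vcross a c) <=
              vnorm b * vnorm c * vnorm (vcross a b) + vnorm a * vnorm b * vnorm (vcross b c)).
  { rewrite vnorm_sq, <- (Rabs_pos_eq (vdot b b)) by apply vdot_self_ge0.
    rewrite <- vnorm_scale, E. eapply Rle_trans; [apply vnorm_triangle|lra]. }
  apply Rmult_le_reg_l with (vnorm b); nra.
Qed.

Lemma vcross_unit_triangle u v w : vnorm u = 1 -> vnorm v = 1 -> vnorm w = 1 ->
  vnorm (vcross u w) <= vnorm (vcross u v) + vnorm (vcross v w).
Proof. intros Hu Hv Hw. pose proof (vcross_triangle u v w) as T. rewrite Hu, Hv, Hw in T. lra. Qed.

(** * Real analysis *)

Lemma Rdiv_le_Rdiv a b c d : 0 < b -> 0 < d -> a * d <= c * b -> a / b <= c / d.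
Proof.
  intros Hb Hd H. apply Rmult_le_reg_r with (b * d); [nra|].
  replace (a / b * (b * d)) with (a * d) by (field; lra).
  replace (c / d * (b * d)) with (c * b) by (field; lra). exact H.
Qed.

Lemma Rle_of_le_plus_linear x y C h0 : 0 < h0 -> 0 <= C ->
  (forall h, 0 < h <= h0 -> x <= y + C * h) -> x <= y.
Proof.
  intros Hh0 HC H. apply Rle_plus_epsilon. intros eps Heps.
  set (h := Rmin h0 (eps / (C + 1))).
  assert (Hh : 0 < h) by (apply Rmin_glb_lt; [lra|apply Rdiv_lt_0_compat; lra]).
  assert (Ch : C * h <= eps).
  { apply Rle_trans with (C * (eps / (C + 1))).
    - apply Rmult_le_compat_l; [lra|apply Rmin_r].
    - apply Rmult_le_reg_r with (C + 1); [lra|].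
      replace (C * (eps / (C + 1)) * (C + 1)) with (C * eps) by (field; lra). nra. }
  specialize (H h (conj Hh (Rmin_l _ _))). lra.
Qed.

(* For two vectors with [x = |a x b|], [d = a.b] and [P = |a| |b|], so that
   x^2 + d^2 = P^2: if the sine of their angle is at most [s < 1], the cosine
   is nonzero, and if positive it is at least [1 - s^2]. *)
Lemma cos_neq0_of_sin_lt x d P s : 0 <= s < 1 -> 0 < P -> 0 <= x <= s * P ->
  x * x + d * d = P * P -> d <> 0.
Proof. intros Hs HP Hx E ->. assert (x < P) by nra. nra. Qed.

Lemma cos_ge_of_sin_le x d P s : 0 <= s < 1 -> 0 < d -> 0 <= x <= s * P ->
  x * x + d * d = P * P -> (1 - s * s) * P <= d.
Proof.
  intros Hs Hd Hx E.
  destruct (Rle_lt_dec P 0) as [HP|HP]; [nra|].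
  assert (Hx2 : x * x <= (s * P) * (s * P)) by (apply Rmult_le_compat; lra).
  assert (Hk : 0 < 1 - s * s <= 1) by nra.
  destruct (Rle_lt_dec ((1 - s * s) * P) d) as [|Hlt]; auto.
  assert (d * d < (1 - s * s) * P * ((1 - s * s) * P)) by (apply Rmult_le_0_lt_compat; lra).
  nra.
Qed.

(* The left side is |X - Y|^2 for vectors of norms [nX], [nY] with dot
   product [d]. *)
Lemma near_parallel_sq_bound L s nX nY d : 0 <= L -> 0 <= s <= 1 / 2 ->
  (1 - s * s) * L <= nX <= L -> (1 - s * s) * L <= nY <= L -> (1 - s * s) * nX * nY <= d ->
  nX * nX + nY * nY - 2 * d <= (2 * s * L) * (2 * s * L).
Proof.
  intros HL Hs BX BY D.
  assert (Hs2 : 0 <= s * s <= 1 / 4) by nra.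
  assert (HkL : 0 <= (1 - s * s) * L) by (apply Rmult_le_pos; lra).
  assert (A1 : nX * nY <= L * L) by (apply Rmult_le_compat; lra).
  assert (A2 : (nX - nY) * (nX - nY) <= (s * s * L) * (s * s * L)).
  { assert (Habs : Rabs (nX - nY) <= s * s * L) by (apply Rabs_le; split; lra).
    apply Rsqr_le_abs_1. rewrite (Rabs_pos_eq (s * s * L)); auto.
    apply Rmult_le_pos; lra. }
  assert (A4 : s * s * (nX * nY) <= s * s * (L * L)) by (apply Rmult_le_compat_l; lra).
  assert (A5 : s * s * (s * s) * (L * L) <= 1 / 4 * (s * s) * (L * L))
    by (apply Rmult_le_compat_r; [nra|apply Rmult_le_compat_r; lra]).
  nra.
Qed.

Lemma periodic_IZR {T} (h : R -> T) : (forall t, h (t + 1) = h t) ->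
  forall t k, h (t + IZR k) = h t.
Proof.
  intros Hper t k. induction k as [|k IH|k IH] using Z.peano_ind.
  - now rewrite Rplus_0_r.
  - now rewrite succ_IZR, <- Rplus_assoc, Hper.
  - rewrite <- IH, <- Z.sub_1_r, minus_IZR, <- (Hper (t + (IZR k - 1))).
    f_equal; ring.
Qed.

Lemma exists_shift_unit x : exists k, 0 <= x - IZR k < 1.
Proof. exists (Int_part x). pose proof (base_Int_part x). lra. Qed.

Lemma periodic_unif_cont (h : R -> R) :
  (forall t, continuity_pt h t) -> (forall t, h (t + 1) = h t) ->
  forall eps, 0 < eps ->
  exists d, 0 < d /\ forall x y, Rabs (x - y) < d -> Rabs (h x - h y) < eps.
Proof.
  intros Hcont Hper eps Heps.
  destruct (Heine h (fun c => -1 <= c <= 2) (compact_P3 (-1) 2) (fun x _ => Hcont x)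
              (mkposreal _ Heps)) as [d Hd].
  exists (Rmin d 1). split; [apply Rmin_glb_lt; [apply cond_pos|lra]|].
  intros x y Hxy. destruct (exists_shift_unit x) as [k Hk].
  pose proof (Rmin_l d 1); pose proof (Rmin_r d 1). apply Rabs_lt_between in Hxy.
  replace (h x) with (h (x - IZR k)) by (rewrite <- (periodic_IZR h Hper _ k); f_equal; ring).
  replace (h y) with (h (y - IZR k)) by (rewrite <- (periodic_IZR h Hper _ k); f_equal; ring).
  apply Hd; [lra | lra | apply Rabs_lt_between; lra].
Qed.

Lemma continuity_no_root_sign (F : R -> R) a b : continuity F -> a <= b ->
  (forall x, a <= x <= b -> F x <> 0) -> 0 < F a * F b.
Proof.
  intros HF Hab Hne. destruct (Rlt_le_dec 0 (F a * F b)) as [|Hle]; auto.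
  destruct (IVT_cor F a b HF Hab Hle) as [z [Hz E]]. exfalso; exact (Hne z Hz E).
Qed.

Lemma is_derive_of_quotient_bound (F : R -> R) t l K d : 0 < d -> 0 <= K ->
  (forall h, h <> 0 -> Rabs h < d -> Rabs ((F (t + h) - F t) / h - l) <= K * Rabs h) ->
  is_derive F t l.
Proof.
  intros Hd HK H. apply is_derive_Reals. intros eps Heps.
  assert (Hd' : 0 < Rmin d (eps / (K + 1)))
    by (apply Rmin_glb_lt; [lra|apply Rdiv_lt_0_compat; lra]).
  exists (mkposreal _ Hd'). intros h Hh0 Hh; simpl in Hh.
  pose proof (Rmin_l d (eps / (K + 1))); pose proof (Rmin_r d (eps / (K + 1))).
  pose proof (Rabs_pos h).
  eapply Rle_lt_trans; [apply H; lra|].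
  apply Rle_lt_trans with ((K + 1) * Rabs h); [nra|].
  apply Rlt_le_trans with ((K + 1) * (eps / (K + 1))); [apply Rmult_lt_compat_l; lra|].
  right; field; lra.
Qed.

Lemma div_succ_bounds d n : 0 < d -> 0 < d / (INR n + 1) <= d.
Proof.
  intro Hd. pose proof (pos_INR n). split; [apply Rdiv_lt_0_compat; lra|].
  apply Rle_div_l; nra.
Qed.

Lemma div_succ_eventually_lt d e : 0 < d -> 0 < e ->
  exists N, forall n, (N <= n)%nat -> d / (INR n + 1) < e.
Proof.
  intros Hd He. destruct (INR_archimed e d He) as [N HN].
  exists N. intros n Hn. apply le_INR in Hn. apply Rlt_div_l; nra.
Qed.

Section CauchyAt0.

Variables (q : R -> R) (K d : R).
Hypothesis d_pos : 0 < d.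
Hypothesis K_ge0 : 0 <= K.
Hypothesis q_cauchy : forall h h', 0 < Rabs h' <= Rabs h -> Rabs h <= d ->
  Rabs (q h - q h') <= K * Rabs h.

Lemma cauchy_at_0_seq_close n h : 0 < Rabs h <= d -> d / (INR n + 1) <= Rabs h ->
  Rabs (q h - q (d / (INR n + 1))) <= K * Rabs h.
Proof.
  intros Hh Hsh. pose proof (div_succ_bounds d n d_pos).
  apply q_cauchy; [rewrite Rabs_pos_eq|]; lra.
Qed.

Lemma cauchy_at_0_seq_converges : ex_finite_lim_seq (fun n => q (d / (INR n + 1))).
Proof.
  apply ex_lim_seq_cauchy_corr. intros [eps Heps]; simpl.
  destruct (div_succ_eventually_lt d (eps / (K + 1)) d_pos) as [N HN];
    [apply Rdiv_lt_0_compat; lra|].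
  assert (Hsmall : forall k, (N <= k)%nat -> K * (d / (INR k + 1)) < eps).
  { intros k Hk. specialize (HN k Hk). pose proof (div_succ_bounds d k d_pos).
    apply Rle_lt_trans with ((K + 1) * (d / (INR k + 1))); [nra|].
    apply Rlt_le_trans with ((K + 1) * (eps / (K + 1))); [apply Rmult_lt_compat_l; lra|].
    right; field; lra. }
  exists N. intros n m Hn Hm.
  pose proof (div_succ_bounds d n d_pos); pose proof (div_succ_bounds d m d_pos).
  destruct (Rle_dec (d / (INR m + 1)) (d / (INR n + 1))).
  - eapply Rle_lt_trans; [apply cauchy_at_0_seq_close|]; rewrite ?Rabs_pos_eq; try lra. auto.
  - rewrite Rabs_minus_sym.
    eapply Rle_lt_trans; [apply cauchy_at_0_seq_close|]; rewrite ?Rabs_pos_eq; try lra. auto.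
Qed.

Lemma real_limit_at_0 : exists l, forall h, 0 < Rabs h <= d -> Rabs (q h - l) <= K * Rabs h.
Proof.
  destruct cauchy_at_0_seq_converges as [l Hl]. exists l. intros h Hh.
  assert (Lim : is_lim_seq (fun n => Rabs (q h - q (d / (INR n + 1)))) (Rabs (q h - l))).
  { apply (is_lim_seq_abs _ (Finite (q h - l))), is_lim_seq_minus'; auto.
    apply is_lim_seq_const. }
  change (Rbar_le (Rabs (q h - l)) (K * Rabs h)).
  apply (is_lim_seq_le_loc (fun n => Rabs (q h - q (d / (INR n + 1)))) (fun _ => K * Rabs h));
    [|exact Lim|apply is_lim_seq_const].
  destruct (div_succ_eventually_lt d (Rabs h) d_pos (proj1 Hh)) as [N HN].
  exists N. intros n Hn. apply cauchy_at_0_seq_close; [exact Hh|]. left; apply HN; auto.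
Qed.

End CauchyAt0.

Lemma point_limit_at_0 (Q : R -> point) K d : 0 < d -> 0 <= K ->
  (forall h h', 0 < Rabs h' <= Rabs h -> Rabs h <= d -> vdist (Q h) (Q h') <= K * Rabs h) ->
  exists v, forall h, 0 < Rabs h <= d -> vdist (Q h) v <= 3 * K * Rabs h.
Proof.
  intros Hd HK H.
  destruct (real_limit_at_0 (fun h => px (Q h)) K d Hd HK) as [lx Hx];
    [intros; eapply Rle_trans; [apply coord_sub_le_vdist|apply H]; auto|].
  destruct (real_limit_at_0 (fun h => py (Q h)) K d Hd HK) as [ly Hy];
    [intros; eapply Rle_trans; [apply coord_sub_le_vdist|apply H]; auto|].
  destruct (real_limit_at_0 (fun h => pz (Q h)) K d Hd HK) as [lz Hz];
    [intros; eapply Rle_trans; [apply coord_sub_le_vdist|apply H]; auto|].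
  exists (lx, ly, lz). intros h Hh.
  specialize (Hx h Hh); specialize (Hy h Hh); specialize (Hz h Hh).
  eapply Rle_trans; [apply (vnorm_le_l1 (vsub (Q h) (lx, ly, lz)))|].
  unfold vsub, px, py, pz in *; simpl in *. lra.
Qed.

Lemma Rbar_le_min c x y : Rbar_le c x -> Rbar_le c y -> Rbar_le c (Rbar_min x y).
Proof.
  intros Hx Hy. unfold Rbar_min. destruct x, y, c; simpl in *; auto.
  unfold Rmin; destruct Rle_dec; auto.
Qed.

Lemma Rbar_le_mult_plus r a b (A B : Rbar) k : 0 < k ->
  r <= k * (a + b) -> Rbar_le a A -> Rbar_le b B ->
  Rbar_le r (Rbar_mult k (Rbar_plus A B)).
Proof.
  intros Hk H HA HB.
  destruct A as [A| |], B as [B| |]; simpl in *; try tauto; [nra| ..];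
    destruct Rle_dec; try lra; destruct Rle_lt_or_eq_dec; simpl; auto; lra.
Qed.

(** * Thickness and the secant map *)

(* Every triple of points of [P] has circumradius at least [tau], with the
   denominators of r(x,y,z) cleared so that degenerate triples satisfy it
   trivially. *)
Definition thick (P : point -> Prop) (tau : R) : Prop :=
  forall x y z, P x -> P y -> P z ->
  vnorm (vcross (vsub x y) (vsub z y)) * (2 * tau) <= vdist x y * vdist z y * vdist x z.

Lemma thick_sub (P Q : point -> Prop) tau :
  (forall x, P x -> Q x) -> thick Q tau -> thick P tau.
Proof. intros PQ HQ x y z Px Py Pz; apply HQ; auto. Qed.

Lemma vcross_vsub_degenerate x y z :
  x = y \/ z = y \/ x = z -> vnorm (vcross (vsub x y) (vsub z y)) = 0.
Proof. intros [->|[->| ->]]; rewrite <- vnorm_0; f_equal; vec_ring. Qed.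

Lemma thickness_thick n g tau :
  Rbar_le (Finite tau) (thickness n g) -> thick (on_link n g) tau.
Proof.
  intros Ht x y z Hx Hy Hz.
  assert (Hd : 0 <= vdist x y * vdist z y * vdist x z)
    by (apply Rmult_le_pos; [apply Rmult_le_pos|]; apply vnorm_ge0).
  destruct (Req_dec (vnorm (vcross (vsub x y) (vsub z y))) 0) as [C0|C0]; [rewrite C0; lra|].
  assert (Cpos : 0 < 2 * vnorm (vcross (vsub x y) (vsub z y)))
    by (pose proof (vnorm_ge0 (vcross (vsub x y) (vsub z y))); lra).
  assert (Nxy : x <> y) by (intro E; apply C0, vcross_vsub_degenerate; auto).
  assert (Nzy : z <> y) by (intro E; apply C0, vcross_vsub_degenerate; auto).
  assert (Nxz : x <> z) by (intro E; apply C0, vcross_vsub_degenerate; auto).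
  assert (Htau : tau <= vdist y x * vdist x z * vdist z y /
                        (2 * vnorm (vcross (vsub x y) (vsub z y)))).
  { apply (Rbar_le_trans tau (thickness n g) (Finite _) Ht).
    destruct (Glb_Rbar_correct (fun r : R => exists x y z,
      on_link n g x /\ on_link n g y /\ on_link n g z /\
      x <> y /\ y <> z /\ x <> z /\ circumradius x y z = Finite r)) as [Hlb _].
    apply Hlb. exists y, x, z. repeat split; auto.
    unfold circumradius. destruct Req_EM_T; [contradiction|reflexivity]. }
  apply Rle_div_r in Htau; auto. rewrite (vdist_sym y x) in Htau. lra.
Qed.

Lemma secant_norm x y : x <> y -> vnorm (secant x y) = 1.
Proof.
  intro Nxy. pose proof (vdist_gt0 x y Nxy). unfold secant.
  rewrite vnorm_scale, Rabs_pos_eq by (left; apply Rinv_0_lt_compat; auto).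
  unfold vdist in *; field; lra.
Qed.

Lemma vcross_secant_norm x y x' y' : x <> y -> x' <> y' ->
  vnorm (vcross (secant x y) (secant x' y')) =
  vnorm (vcross (vsub x y) (vsub x' y')) / (vdist x y * vdist x' y').
Proof.
  intros N N'. pose proof (vdist_gt0 x y N); pose proof (vdist_gt0 x' y' N').
  unfold secant.
  replace (vcross (vscale (/ vdist x y) (vsub x y)) (vscale (/ vdist x' y') (vsub x' y')))
    with (vscale (/ vdist x y * / vdist x' y') (vcross (vsub x y) (vsub x' y'))) by vec_ring.
  rewrite vnorm_scale, Rabs_pos_eq by (left; apply Rmult_lt_0_compat; apply Rinv_0_lt_compat; auto).
  field; lra.
Qed.

Lemma vcross_secant_swap x y : x <> y -> vnorm (vcross (secant x y) (secant y x)) = 0.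
Proof.
  intro N. rewrite vcross_secant_norm by auto.
  replace (vcross (vsub x y) (vsub y x)) with (0, 0, 0) by vec_ring.
  rewrite vnorm_0; unfold Rdiv; ring.
Qed.

Lemma rp2_dist_unit u v : vnorm u = 1 -> vnorm v = 1 -> rp2_dist u v = vnorm (vcross u v).
Proof.
  intros Hu Hv. pose proof (vdot_cauchy_schwarz u v) as C. rewrite Hu, Hv in C.
  unfold rp2_dist. rewrite sin_acos by (apply Rabs_le_between; lra).
  unfold vnorm; f_equal. pose proof (lagrange_identity u v) as L.
  rewrite <- (vnorm_sq u), <- (vnorm_sq v), Hu, Hv in L. unfold Rsqr; lra.
Qed.

Section Secant.

Variables (P : point -> Prop) (tau : R).
Hypothesis tau_pos : 0 < tau.
Hypothesis P_thick : thick P tau.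

Lemma thick_sine x v z : P x -> P v -> P z -> x <> v -> z <> v ->
  vnorm (vcross (vsub x v) (vsub z v)) / (vdist x v * vdist z v) <= vdist x z / (2 * tau).
Proof.
  intros Px Pv Pz Nxv Nzv. pose proof (vdist_gt0 x v Nxv); pose proof (vdist_gt0 z v Nzv).
  pose proof (P_thick x v z Px Pv Pz).
  apply Rdiv_le_Rdiv; [apply Rmult_lt_0_compat; auto | lra | lra].
Qed.

Lemma secant_move_tail x y x' : P x -> P y -> P x' -> x <> y -> x' <> y ->
  vnorm (vcross (secant x y) (secant x' y)) <= vdist x x' / (2 * tau).
Proof. intros. rewrite vcross_secant_norm by auto. apply thick_sine; auto. Qed.

Lemma secant_move_head x y y' : P x -> P y -> P y' -> x <> y -> x <> y' ->
  vnorm (vcross (secant x y) (secant x y')) <= vdist y y' / (2 * tau).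
Proof.
  intros. rewrite vcross_secant_norm by auto.
  replace (vcross (vsub x y) (vsub x y')) with (vcross (vsub y x) (vsub y' x)) by vec_ring.
  rewrite (vdist_sym x y), (vdist_sym x y'). apply thick_sine; auto.
Qed.

(* The intermediate secant must join distinct points: when [x' = y] pass
   through S(x,y') instead of S(x',y). *)
Lemma secant_lipschitz x y x' y' : P x -> P y -> P x' -> P y' -> x <> y -> x' <> y' ->
  rp2_dist (secant x y) (secant x' y') <= (vdist x x' + vdist y y') / (2 * tau).
Proof.
  intros Px Py Px' Py' Nxy Nx'y'.
  rewrite rp2_dist_unit by (apply secant_norm; auto).
  pose proof (vnorm_ge0 (vsub x x')); pose proof (vnorm_ge0 (vsub y y')).
  assert (Hsum : forall a b, a / (2 * tau) + b / (2 * tau) = (a + b) / (2 * tau))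
    by (intros; field; lra).
  destruct (classic (x' = y)) as [->|Nx'y].
  - destruct (classic (x = y')) as [->|Nxy'].
    + rewrite vcross_secant_swap by auto.
      apply Rdiv_le_0_compat; unfold vdist; lra.
    + eapply Rle_trans; [apply (vcross_unit_triangle _ (secant x y')); apply secant_norm; auto|].
      rewrite <- Hsum, (Rplus_comm (vdist x y / _)).
      apply Rplus_le_compat; [apply secant_move_head | apply secant_move_tail]; auto.
  - eapply Rle_trans; [apply (vcross_unit_triangle _ (secant x' y)); apply secant_norm; auto|].
    rewrite <- Hsum.
    apply Rplus_le_compat; [apply secant_move_tail | apply secant_move_head]; auto.
Qed.

End Secant.

Lemma chord_le_arclength f a b : a <= b -> Rbar_le (vdist (f a) (f b)) (arclength f a b).
Proof.
  intro Hab. destruct (Lub_Rbar_correct (polygon_length f a b)) as [Hub _].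
  apply Hub. exists 1%nat, (fun j => if Nat.eqb j 0 then a else b); simpl.
  repeat split; auto; [|ring]. intros j Hj. destruct j; simpl; [lra|lia].
Qed.

Lemma chord_le_arc_dist f s t : (forall u, f (u + 1) = f u) -> Rabs (s - t) <= 1 ->
  Rbar_le (vdist (f s) (f t)) (arc_dist f s t).
Proof.
  intros Hper Hst. apply Rabs_le_between in Hst.
  assert (E : vdist (f s) (f t) = vdist (f (Rmin s t)) (f (Rmax s t))).
  { unfold Rmin, Rmax; destruct Rle_dec; auto using vdist_sym. }
  unfold arc_dist. rewrite E. apply Rbar_le_min.
  - apply chord_le_arclength. unfold Rmin, Rmax; destruct Rle_dec; lra.
  - rewrite <- (Hper (Rmin s t)), vdist_sym. apply chord_le_arclength.
    unfold Rmin, Rmax; destruct Rle_dec; lra.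
Qed.

(** * Arclength of a thick closed curve *)

(* [l] lists the subdivision points after [a]; the last one is [b]. *)
Fixpoint subdivision (a : R) (l : list R) (b : R) : Prop :=
  match l with nil => a = b | x :: l' => a <= x /\ subdivision x l' b end.

Lemma subdivision_le a l b : subdivision a l b -> a <= b.
Proof.
  revert a; induction l as [|x l IH]; simpl; intros a H; [lra|].
  destruct H as [H1 H2]. specialize (IH _ H2). lra.
Qed.

Lemma subdivision_app a l1 b l2 c :
  subdivision a l1 b -> subdivision b l2 c -> subdivision a (l1 ++ l2) c.
Proof.
  revert a; induction l1 as [|x l1 IH]; simpl; intros a H1 H2; [subst; auto|].
  destruct H1; split; auto.
Qed.

Lemma subdivision_shift a l b c :
  subdivision a l b -> subdivision (a + c) (map (fun x => x + c) l) (b + c).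
Proof.
  revert a; induction l as [|x l IH]; simpl; intros a H; [subst; auto|].
  destruct H; split; [lra|auto].
Qed.

Section Curve.

Variables (f : R -> point) (tau : R).
Hypothesis tau_pos : 0 < tau.
Hypothesis f_cont : forall t, continuity_pt (fun u => px (f u)) t /\
  continuity_pt (fun u => py (f u)) t /\ continuity_pt (fun u => pz (f u)) t.
Hypothesis f_per : forall t, f (t + 1) = f t.
Hypothesis f_inj : forall s t, 0 <= s < 1 -> 0 <= t < 1 -> f s = f t -> s = t.
Hypothesis f_thick : thick (fun x => exists s, x = f s) tau.

Lemma thick_f x y z :
  vnorm (vcross (vsub (f x) (f y)) (vsub (f z) (f y))) * (2 * tau) <=
  vdist (f x) (f y) * vdist (f z) (f y) * vdist (f x) (f z).
Proof. apply f_thick; eauto. Qed.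

Lemma f_inj_window p q : p < q < p + 1 -> f p <> f q.
Proof.
  intros Hpq E. destruct (exists_shift_unit p) as [k Hk].
  assert (Shift : forall t, f t = f (t - IZR k))
    by (intro t; rewrite <- (periodic_IZR f f_per (t - IZR k) k); f_equal; ring).
  rewrite (Shift p), (Shift q) in E.
  destruct (Rlt_le_dec (q - IZR k) 1).
  - assert (p - IZR k = q - IZR k) by (apply f_inj; auto; lra). lra.
  - replace (f (q - IZR k)) with (f (q - IZR k - 1)) in E
      by (rewrite <- (f_per (q - IZR k - 1)); f_equal; ring).
    assert (p - IZR k = q - IZR k - 1) by (apply f_inj; auto; lra). lra.
Qed.

Lemma vdist_f_gt0 p q : p < q < p + 1 -> 0 < vdist (f q) (f p).
Proof. intro H. apply vdist_gt0. intro E. apply (f_inj_window p q H); auto. Qed.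

Lemma f_unif_cont eps : 0 < eps ->
  exists d, 0 < d /\ forall x y, Rabs (x - y) < d -> vdist (f x) (f y) < eps.
Proof.
  intro Heps.
  assert (Coord : forall pr : point -> R, (forall t, continuity_pt (fun u => pr (f u)) t) ->
    exists d, 0 < d /\ forall x y, Rabs (x - y) < d -> Rabs (pr (f x) - pr (f y)) < eps / 3).
  { intros pr Hpr. apply periodic_unif_cont; auto; [intro t; now rewrite f_per|lra]. }
  destruct (Coord px) as [d1 [Hd1 H1]]; [apply f_cont|].
  destruct (Coord py) as [d2 [Hd2 H2]]; [apply f_cont|].
  destruct (Coord pz) as [d3 [Hd3 H3]]; [apply f_cont|].
  exists (Rmin d1 (Rmin d2 d3)). split; [repeat apply Rmin_glb_lt; auto|].
  intros x y Hxy.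
  pose proof (Rmin_l d1 (Rmin d2 d3)); pose proof (Rmin_r d1 (Rmin d2 d3)).
  pose proof (Rmin_l d2 d3); pose proof (Rmin_r d2 d3).
  specialize (H1 x y ltac:(lra)); specialize (H2 x y ltac:(lra)); specialize (H3 x y ltac:(lra)).
  eapply Rle_lt_trans; [apply (vnorm_le_l1 (vsub (f x) (f y)))|].
  unfold vsub, px, py, pz in *; simpl in *. lra.
Qed.

Lemma continuity_dot_f P w : continuity (fun t => vdot (vsub (f t) P) w).
Proof.
  intro t. destruct (f_cont t) as [Cx [Cy Cz]].
  assert (Lin : forall h : R -> R, continuity_pt h t ->
            forall a b, continuity_pt (fun u => (h u - a) * b) t).
  { intros h Ch a b. apply (continuity_pt_mult (fun u => h u - a) (fun _ => b)).
    - apply (continuity_pt_minus h (fun _ => a)); auto. apply continuity_pt_const; intros ? ?; auto.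
    - apply continuity_pt_const; intros ? ?; auto. }
  change (continuity_pt (fun u => (px (f u) - px P) * px w + (py (f u) - py P) * py w
                                  + (pz (f u) - pz P) * pz w) t).
  apply (continuity_pt_plus (fun u => _ + _) (fun u => _));
    [apply (continuity_pt_plus (fun u => _) (fun u => _))|]; apply Lin; auto.
Qed.

Definition near_ends a b eta :=
  forall x, a <= x <= b -> vdist (f x) (f a) <= eta /\ vdist (f x) (f b) <= eta.

Lemma near_ends_ge0 a b eta : a <= b -> near_ends a b eta -> 0 <= eta.
Proof.
  intros Hab Hne. destruct (Hne a) as [H _]; [lra|].
  pose proof (vnorm_ge0 (vsub (f a) (f a))). unfold vdist in H. lra.
Qed.

(* Thickness at [p] and at [b] bounds the angles from [f q - f p] to
   [f b - f p] and from there to [f b - f a]; then use [vcross_triangle]. *)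
Lemma subchord_sine_le a b eta p q : b < a + 1 -> near_ends a b eta ->
  a <= p -> p < q -> q <= b ->
  vnorm (vcross (vsub (f q) (f p)) (vsub (f b) (f a))) <=
  eta / tau * (vdist (f q) (f p) * vdist (f b) (f a)).
Proof.
  intros Hab Hne Hp Hpq Hq.
  pose proof (thick_f q p b) as Tp. pose proof (thick_f p b a) as Tb.
  replace (vcross (vsub (f p) (f b)) (vsub (f a) (f b)))
    with (vcross (vsub (f b) (f p)) (vsub (f b) (f a))) in Tb by vec_ring.
  rewrite (vdist_sym (f p) (f b)), (vdist_sym (f a) (f b)) in Tb.
  pose proof (vcross_triangle (vsub (f q) (f p)) (vsub (f b) (f p)) (vsub (f b) (f a))) as T.
  destruct (Hne q) as [_ Eq]; [lra|]. destruct (Hne p) as [Ep _]; [lra|].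
  pose proof (vdist_f_gt0 p b ltac:(lra)).
  replace (eta / tau * _) with (eta * vdist (f q) (f p) * vdist (f b) (f a) / tau)
    by (field; lra).
  apply Rle_div_r; auto. unfold vdist in *.
  set (A := vsub (f q) (f p)) in *; set (B := vsub (f b) (f a)) in *;
    set (C := vsub (f b) (f p)) in *.
  pose proof (vnorm_ge0 A); pose proof (vnorm_ge0 B); pose proof (vnorm_ge0 (vcross A B)).
  assert (X1 : vnorm (vcross A C) * (2 * tau) * vnorm B <= vnorm A * vnorm C * eta * vnorm B).
  { apply Rmult_le_compat_r; auto. eapply Rle_trans; [exact Tp|].
    apply Rmult_le_compat_l; [apply Rmult_le_pos; apply vnorm_ge0|exact Eq]. }
  assert (X2 : vnorm (vcross C B) * (2 * tau) * vnorm A <= vnorm C * vnorm B * eta * vnorm A).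
  { apply Rmult_le_compat_r; auto. eapply Rle_trans; [exact Tb|].
    apply Rmult_le_compat_l; [apply Rmult_le_pos; apply vnorm_ge0|exact Ep]. }
  apply Rmult_le_reg_r with (2 * vnorm C); [lra|].
  apply Rmult_le_compat_r with (r := 2 * tau) in T; lra.
Qed.

Lemma subchord_dot_neq0 a b eta p q : b < a + 1 -> near_ends a b eta -> eta < tau ->
  a <= p -> p < q -> q <= b -> vdot (vsub (f q) (f p)) (vsub (f b) (f a)) <> 0.
Proof.
  intros Hab Hne Het Hp Hpq Hq.
  pose proof (near_ends_ge0 a b eta ltac:(lra) Hne).
  pose proof (vdist_f_gt0 p q ltac:(lra)); pose proof (vdist_f_gt0 a b ltac:(lra)).
  apply (cos_neq0_of_sin_lt (vnorm (vcross (vsub (f q) (f p)) (vsub (f b) (f a))))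
           _ (vdist (f q) (f p) * vdist (f b) (f a)) (eta / tau)).
  - split; [apply Rdiv_le_0_compat|apply Rlt_div_l]; lra.
  - apply Rmult_lt_0_compat; auto.
  - split; [apply vnorm_ge0|apply (subchord_sine_le a b); auto].
  - apply lagrange_vnorm.
Qed.

(* The dot product never vanishes, so by connectedness it keeps the sign it
   has for the full chord. *)
Lemma subchord_dot_pos a b eta p q : b < a + 1 -> near_ends a b eta -> eta < tau ->
  a <= p -> p < q -> q <= b -> 0 < vdot (vsub (f q) (f p)) (vsub (f b) (f a)).
Proof.
  intros Hab Hne Het Hp Hpq Hq.
  set (B := vsub (f b) (f a)).
  assert (Fb : 0 < vdot (vsub (f b) (f a)) B).
  { unfold B. rewrite <- vnorm_sq. pose proof (vdist_f_gt0 a b ltac:(lra)).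
    unfold vdist in *; nra. }
  assert (Fq : 0 < vdot (vsub (f q) (f a)) B * vdot (vsub (f b) (f a)) B).
  { apply (continuity_no_root_sign (fun x => vdot (vsub (f x) (f a)) B));
      [apply continuity_dot_f | lra |].
    intros x Hx. apply (subchord_dot_neq0 a b eta); auto; lra. }
  assert (Gp : 0 < vdot (vsub (f a) (f q)) B * vdot (vsub (f p) (f q)) B).
  { apply (continuity_no_root_sign (fun x => vdot (vsub (f x) (f q)) B));
      [apply continuity_dot_f | lra |].
    intros x Hx. rewrite vdot_vsub_swap. apply Ropp_neq_0_compat.
    apply (subchord_dot_neq0 a b eta); auto; lra. }
  rewrite !(vdot_vsub_swap _ (f q)) in Gp. nra.
Qed.

Lemma subchord_dot_ge a b eta p q : b < a + 1 -> near_ends a b eta -> eta < tau ->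
  a <= p -> p <= q -> q <= b ->
  (1 - (eta / tau) * (eta / tau)) * vdist (f q) (f p) * vdist (f b) (f a) <=
  vdot (vsub (f q) (f p)) (vsub (f b) (f a)).
Proof.
  intros Hab Hne Het Hp Hpq Hq.
  destruct (Rle_lt_or_eq_dec p q Hpq) as [Hlt| <-].
  - pose proof (near_ends_ge0 a b eta ltac:(lra) Hne).
    rewrite Rmult_assoc.
    apply (cos_ge_of_sin_le (vnorm (vcross (vsub (f q) (f p)) (vsub (f b) (f a))))).
    + split; [apply Rdiv_le_0_compat|apply Rlt_div_l]; lra.
    + apply (subchord_dot_pos a b eta); auto.
    + split; [apply vnorm_ge0|apply (subchord_sine_le a b); auto].
    + apply lagrange_vnorm.
  - rewrite vdist_xx. replace (vsub (f p) (f p)) with (0, 0, 0) by vec_ring.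
    unfold vdot, px, py, pz; simpl; lra.
Qed.

Fixpoint inscribed (a : R) (l : list R) : R :=
  match l with nil => 0 | x :: l' => vdist (f x) (f a) + inscribed x l' end.

Lemma inscribed_app a l1 b l2 : subdivision a l1 b ->
  inscribed a (l1 ++ l2) = inscribed a l1 + inscribed b l2.
Proof.
  revert a; induction l1 as [|x l1 IH]; simpl; intros a H.
  - subst; ring.
  - rewrite (IH x (proj2 H)); ring.
Qed.

Lemma subdivision_split_inscribed a l c b : subdivision a l c -> a <= b -> b <= c ->
  exists l1 l2, subdivision a l1 b /\ subdivision b l2 c /\
                inscribed a l <= inscribed a l1 + inscribed b l2.
Proof.
  revert a; induction l as [|x l IH]; simpl; intros a H Hab Hbc.
  - subst. exists nil, nil. simpl. repeat split; lra.
  - destruct H as [Hax H]. destruct (Rle_dec x b) as [Hxb|Hxb].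
    + destruct (IH x H Hxb Hbc) as [l1 [l2 [S1 [S2 E]]]].
      exists (x :: l1), l2. simpl. repeat split; auto. lra.
    + exists (b :: nil), (x :: l). simpl. repeat split; auto; try lra.
      pose proof (vdist_triangle (f x) (f b) (f a)). lra.
Qed.

Lemma inscribed_degenerate a l : subdivision a l a -> inscribed a l = 0.
Proof.
  revert a; induction l as [|x l IH]; simpl; intros a H; auto.
  destruct H as [Hax H]. pose proof (subdivision_le _ _ _ H).
  replace x with a in * by lra. rewrite vdist_xx, IH; auto. ring.
Qed.

Lemma inscribed_le_chord a b eta l : b < a + 1 -> near_ends a b eta -> eta < tau ->
  subdivision a l b -> (1 - (eta / tau) * (eta / tau)) * inscribed a l <= vdist (f b) (f a).
Proof.
  intros Hab Hne Het Hl.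
  set (k := 1 - (eta / tau) * (eta / tau)).
  assert (Tel : forall l p, a <= p -> subdivision p l b ->
    k * inscribed p l * vdist (f b) (f a) <= vdot (vsub (f b) (f p)) (vsub (f b) (f a))).
  { induction l0 as [|x l0 IH]; simpl; intros p Hp H.
    - subst. replace (vsub (f b) (f b)) with (0, 0, 0) by vec_ring.
      unfold vdot, px, py, pz; simpl; lra.
    - destruct H as [Hpx H]. pose proof (subdivision_le _ _ _ H).
      pose proof (subchord_dot_ge a b eta p x Hab Hne Het Hp Hpx ltac:(lra)) as D.
      specialize (IH x ltac:(lra) H).
      replace (vdot (vsub (f b) (f p)) (vsub (f b) (f a))) with
        (vdot (vsub (f x) (f p)) (vsub (f b) (f a)) + vdot (vsub (f b) (f x)) (vsub (f b) (f a)))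
        by (vec_simpl; ring).
      fold k in D. lra. }
  destruct (Rle_lt_or_eq_dec a b (subdivision_le _ _ _ Hl)) as [Hlt| <-].
  - specialize (Tel l a (Rle_refl a) Hl).
    rewrite <- vnorm_sq in Tel. fold (vdist (f b) (f a)) in Tel.
    pose proof (vdist_f_gt0 a b ltac:(lra)).
    apply Rmult_le_reg_r with (vdist (f b) (f a)); auto.
  - rewrite inscribed_degenerate, vdist_xx; auto. lra.
Qed.

Definition rectifiable a b := exists M, forall l, subdivision a l b -> inscribed a l <= M.

(* [real] maps an infinite supremum to 0: [arc_len] is meaningful once
   [rectifiable_all] is known. *)
Definition arc_len a b : R :=
  real (Lub_Rbar (fun v => exists l, subdivision a l b /\ v = inscribed a l)).

Lemma arc_len_spec a b : a <= b -> rectifiable a b ->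
  (forall l, subdivision a l b -> inscribed a l <= arc_len a b) /\
  (forall M, (forall l, subdivision a l b -> inscribed a l <= M) -> arc_len a b <= M).
Proof.
  intros Hab [M HM]. unfold arc_len.
  destruct (Lub_Rbar_correct (fun v => exists l, subdivision a l b /\ v = inscribed a l))
    as [Hub Hlub].
  assert (Bound : forall M', (forall l, subdivision a l b -> inscribed a l <= M') ->
            Rbar_le (Lub_Rbar (fun v => exists l, subdivision a l b /\ v = inscribed a l)) M')
    by (intros M' HM'; apply Hlub; intros v [l [Hl ->]]; apply HM'; auto).
  destruct (Lub_Rbar _) as [L| |]; simpl in *.
  - split; [intros l Hl; apply (Hub (inscribed a l)); eauto|exact Bound].
  - exact (False_ind _ (Bound M HM)).
  - exfalso. apply (Hub (inscribed a (b :: nil))). exists (b :: nil). simpl; auto.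
Qed.

Lemma short_inscribed_le_chord : exists d, 0 < d /\ d <= 1 / 2 /\
  forall a b l, a <= b -> b - a < d -> subdivision a l b ->
  inscribed a l <= 4 / 3 * vdist (f b) (f a).
Proof.
  destruct (f_unif_cont (tau / 2)) as [d [Hd H]]; [lra|].
  exists (Rmin d (1 / 2)). split; [apply Rmin_glb_lt; lra|split; [apply Rmin_r|]].
  intros a b l Hab Hba Hl. pose proof (Rmin_l d (1 / 2)); pose proof (Rmin_r d (1 / 2)).
  assert (Hne : near_ends a b (tau / 2))
    by (intros x Hx; split; left; apply H; apply Rabs_lt_between; lra).
  pose proof (inscribed_le_chord a b (tau / 2) l ltac:(lra) Hne ltac:(lra) Hl) as B.
  replace (tau / 2 / tau) with (1 / 2) in B by (field; lra). lra.
Qed.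

Lemma rectifiable_add a b c : a <= b -> b <= c ->
  rectifiable a b -> rectifiable b c -> rectifiable a c.
Proof.
  intros Hab Hbc [M1 B1] [M2 B2]. exists (M1 + M2). intros l Hl.
  destruct (subdivision_split_inscribed a l c b Hl Hab Hbc) as [l1 [l2 [S1 [S2 E]]]].
  specialize (B1 l1 S1); specialize (B2 l2 S2). lra.
Qed.

Lemma rectifiable_all a b : a <= b -> rectifiable a b.
Proof.
  destruct short_inscribed_le_chord as [d [Hd [_ Hshort]]].
  assert (Short : forall a b, a <= b -> b - a < d -> rectifiable a b)
    by (intros a' b' H1 H2; exists (4 / 3 * vdist (f b') (f a')); auto).
  assert (Steps : forall n a b, a <= b -> b - a <= INR n * (d / 2) -> rectifiable a b).
  { induction n as [|n IH]; intros a' b' H1 H2.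
    - simpl in H2. apply Short; lra.
    - rewrite S_INR in H2. destruct (Rle_dec (b' - a') (d / 2)).
      + apply Short; lra.
      + apply rectifiable_add with (a' + d / 2); try lra; [apply Short|apply IH]; lra. }
  intro Hab. destruct (INR_archimed (d / 2) (b - a)) as [N HN]; [lra|].
  apply (Steps N); lra.
Qed.

Lemma arc_len_ub a b l : subdivision a l b -> inscribed a l <= arc_len a b.
Proof.
  intro Hl. pose proof (subdivision_le _ _ _ Hl) as Hab.
  exact (proj1 (arc_len_spec a b Hab (rectifiable_all a b Hab)) l Hl).
Qed.

Lemma arc_len_lub a b M : a <= b ->
  (forall l, subdivision a l b -> inscribed a l <= M) -> arc_len a b <= M.
Proof. intro Hab. exact (proj2 (arc_len_spec a b Hab (rectifiable_all a b Hab)) M). Qed.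

Lemma chord_le_arc_len a b : a <= b -> vdist (f b) (f a) <= arc_len a b.
Proof.
  intro Hab. replace (vdist (f b) (f a)) with (inscribed a (b :: nil)) by (simpl; ring).
  apply arc_len_ub. simpl; auto.
Qed.

Lemma arc_len_ge0 a b : a <= b -> 0 <= arc_len a b.
Proof. intro Hab. eapply Rle_trans; [apply vnorm_ge0|apply chord_le_arc_len; auto]. Qed.

Lemma arc_len_add a b c : a <= b -> b <= c -> arc_len a c = arc_len a b + arc_len b c.
Proof.
  intros Hab Hbc. apply Rle_antisym.
  - apply arc_len_lub; [lra|]. intros l Hl.
    destruct (subdivision_split_inscribed a l c b Hl Hab Hbc) as [l1 [l2 [S1 [S2 E]]]].
    pose proof (arc_len_ub _ _ _ S1); pose proof (arc_len_ub _ _ _ S2). lra.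
  - assert (Both : forall l1 l2, subdivision a l1 b -> subdivision b l2 c ->
                   inscribed a l1 <= arc_len a c - inscribed b l2).
    { intros l1 l2 S1 S2.
      pose proof (arc_len_ub a c (l1 ++ l2) (subdivision_app a l1 b l2 c S1 S2)) as U.
      rewrite (inscribed_app a l1 b l2 S1) in U. lra. }
    assert (Hr : arc_len b c <= arc_len a c - arc_len a b).
    { apply arc_len_lub; auto. intros l2 S2.
      assert (arc_len a b <= arc_len a c - inscribed b l2)
        by (apply arc_len_lub; auto; intros l1 S1; apply Both; auto).
      lra. }
    lra.
Qed.

Lemma arc_len_le_outer a b c d : a <= b -> b <= c -> c <= d -> arc_len b c <= arc_len a d.
Proof.
  intros Hab Hbc Hcd. rewrite (arc_len_add a b d), (arc_len_add b c d) by lra.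
  pose proof (arc_len_ge0 a b Hab); pose proof (arc_len_ge0 c d Hcd). lra.
Qed.

Lemma near_ends_arc_len a b : a <= b -> near_ends a b (arc_len a b).
Proof.
  intros Hab x Hx. split.
  - eapply Rle_trans; [apply chord_le_arc_len|apply arc_len_le_outer]; lra.
  - rewrite vdist_sym. eapply Rle_trans; [apply chord_le_arc_len|apply arc_len_le_outer]; lra.
Qed.

Lemma arc_len_short : exists d, 0 < d /\
  forall a b, a <= b -> b - a < d -> arc_len a b <= 4 / 3 * vdist (f b) (f a).
Proof.
  destruct short_inscribed_le_chord as [d [Hd [_ H]]].
  exists d. split; auto. intros a b Hab Hba. apply arc_len_lub; auto.
Qed.

Lemma arc_len_chord_lower a b : a <= b -> b < a + 1 -> arc_len a b < tau ->
  (1 - (arc_len a b / tau) * (arc_len a b / tau)) * arc_len a b <= vdist (f b) (f a).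
Proof.
  intros Hab Hba HL. set (L := arc_len a b) in *.
  assert (Hk : 0 < 1 - (L / tau) * (L / tau)).
  { assert (0 <= L) by (unfold L; apply arc_len_ge0; auto).
    assert (L / tau < 1) by (apply Rlt_div_l; lra).
    assert (0 <= L / tau) by (apply Rdiv_le_0_compat; lra). nra. }
  rewrite Rmult_comm. apply Rle_div_r; auto. apply arc_len_lub; auto. intros l Hl.
  apply Rle_div_r; auto. rewrite Rmult_comm.
  exact (inscribed_le_chord a b L l Hba (near_ends_arc_len a b Hab) HL Hl).
Qed.

Lemma inscribed_shift a l c : (forall t, f (t + c) = f t) ->
  inscribed (a + c) (map (fun x => x + c) l) = inscribed a l.
Proof. intro Hc. revert a; induction l as [|x l IH]; intro a; simpl; auto. now rewrite IH, !Hc. Qed.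

Lemma arc_len_shift_le a b c : (forall t, f (t + c) = f t) -> a <= b ->
  arc_len a b <= arc_len (a + c) (b + c).
Proof.
  intros Hc Hab. apply arc_len_lub; auto. intros l Hl.
  rewrite <- (inscribed_shift a l c Hc). apply arc_len_ub, subdivision_shift; auto.
Qed.

Lemma arc_len_shift a b c : (forall t, f (t + c) = f t) -> a <= b ->
  arc_len (a + c) (b + c) = arc_len a b.
Proof.
  intros Hc Hab. apply Rle_antisym; [|apply arc_len_shift_le; auto].
  assert (Hc' : forall t, f (t + - c) = f t)
    by (intro t; rewrite <- (Hc (t + - c)); f_equal; ring).
  pose proof (arc_len_shift_le (a + c) (b + c) (- c) Hc' ltac:(lra)) as H.
  replace (a + c + - c) with a in H by ring; replace (b + c + - c) with b in H by ring. exact H.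
Qed.

Definition total_len := arc_len 0 1.

Lemma arc_len_period a : arc_len a (a + 1) = total_len.
Proof.
  destruct (exists_shift_unit a) as [k Hk]. set (a' := a - IZR k) in *.
  replace a with (a' + IZR k) by (unfold a'; ring).
  replace (a' + IZR k + 1) with (a' + 1 + IZR k) by ring.
  rewrite arc_len_shift by (auto using periodic_IZR; lra).
  rewrite (arc_len_add a' 1 (a' + 1)) by lra.
  replace (arc_len 1 (a' + 1)) with (arc_len 0 a')
    by (rewrite <- (arc_len_shift 0 a' 1 f_per) by lra; f_equal; ring).
  unfold total_len. rewrite Rplus_comm, <- arc_len_add; lra.
Qed.

Lemma arc_len_pos a b : a < b -> 0 < arc_len a b.
Proof.
  intro Hab. set (m := Rmin b (a + 1 / 2)).
  assert (Hm : a < m <= b /\ m < a + 1).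
  { unfold m. pose proof (Rmin_l b (a + 1 / 2)); pose proof (Rmin_r b (a + 1 / 2)).
    repeat split; try lra. apply Rmin_glb_lt; lra. }
  pose proof (vdist_f_gt0 a m ltac:(lra)). pose proof (chord_le_arc_len a m ltac:(lra)).
  pose proof (arc_len_le_outer a a m b ltac:(lra) ltac:(lra) ltac:(lra)). lra.
Qed.

Lemma total_len_pos : 0 < total_len.
Proof. apply arc_len_pos; lra. Qed.

(** * The constant-speed parametrization *)

Definition arc_coord a := if Rle_dec 0 a then arc_len 0 a else - arc_len a 0.

Lemma arc_coord_diff a b : a <= b -> arc_coord b - arc_coord a = arc_len a b.
Proof.
  intro Hab. unfold arc_coord.
  destruct (Rle_dec 0 a), (Rle_dec 0 b); try lra.
  - rewrite (arc_len_add 0 a b) by lra. ring.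
  - rewrite (arc_len_add a 0 b) by lra. ring.
  - rewrite (arc_len_add a b 0) by lra. ring.
Qed.

Lemma arc_coord_0 : arc_coord 0 = 0.
Proof. pose proof (arc_len_add 0 0 0) as H. unfold arc_coord. destruct Rle_dec; lra. Qed.

Lemma arc_coord_lt a b : a < b -> arc_coord a < arc_coord b.
Proof.
  intro H. pose proof (arc_coord_diff a b ltac:(lra)). pose proof (arc_len_pos a b H). lra.
Qed.

Lemma arc_coord_le a b : a <= b -> arc_coord a <= arc_coord b.
Proof. intro H. pose proof (arc_coord_diff a b H). pose proof (arc_len_ge0 a b H). lra. Qed.

Lemma arc_coord_inj a b : arc_coord a = arc_coord b -> a = b.
Proof.
  intro E. destruct (Rtotal_order a b) as [H|[H|H]]; auto;
    [pose proof (arc_coord_lt a b H)|pose proof (arc_coord_lt b a H)]; lra.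
Qed.

Lemma arc_coord_period a : arc_coord (a + 1) = arc_coord a + total_len.
Proof. pose proof (arc_coord_diff a (a + 1) ltac:(lra)). rewrite arc_len_period in H. lra. Qed.

Lemma arc_coord_shift a k : arc_coord (a + IZR k) = arc_coord a + IZR k * total_len.
Proof.
  pose proof (periodic_IZR (fun t => arc_coord t - t * total_len)) as P.
  simpl in P. specialize (P ltac:(intro t; rewrite arc_coord_period; ring) a k). lra.
Qed.

Lemma arc_coord_cont : continuity arc_coord.
Proof.
  intros x eps Heps. destruct arc_len_short as [d [Hd Hshort]].
  destruct (f_unif_cont (3 / 4 * eps)) as [e [He U]]; [lra|].
  exists (Rmin e d). split; [apply Rmin_glb_lt; auto|].
  intros y [_ Hy]. simpl in *; unfold R_dist in *.
  pose proof (Rmin_l e d); pose proof (Rmin_r e d).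
  assert (Near : forall a b, a <= b -> b - a < Rmin e d -> Rabs (arc_coord b - arc_coord a) < eps).
  { intros a b Hab Hba. rewrite arc_coord_diff, Rabs_pos_eq by (auto; apply arc_len_ge0; auto).
    pose proof (Hshort a b Hab ltac:(lra)).
    assert (vdist (f b) (f a) < 3 / 4 * eps) by (apply U; apply Rabs_lt_between; lra). lra. }
  apply Rabs_lt_between in Hy. destruct (Rle_dec x y).
  - apply Near; lra.
  - rewrite Rabs_minus_sym. apply Near; lra.
Qed.

Lemma arc_coord_onto v : exists a, arc_coord a = v.
Proof.
  pose proof total_len_pos as HL.
  destruct (exists_shift_unit (v / total_len)) as [k Hk].
  set (w := v - IZR k * total_len).
  assert (Hw : 0 <= w < total_len).
  { assert (w = (v / total_len - IZR k) * total_len) by (unfold w; field; lra). nra. }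
  assert (C : continuity (fun a => arc_coord a - w))
    by (apply continuity_minus; [apply arc_coord_cont|apply continuity_const; intros ? ?; auto]).
  destruct (IVT_cor _ 0 1 C ltac:(lra)) as [a [_ Ea]].
  { rewrite arc_coord_0. pose proof (arc_coord_period 0) as P. rewrite Rplus_0_l, arc_coord_0 in P.
    rewrite P. nra. }
  exists (a + IZR k). rewrite arc_coord_shift. unfold w in Ea. lra.
Qed.

Definition arc_inv v := proj1_sig (constructive_indefinite_description _ (arc_coord_onto v)).

Lemma arc_coord_inv v : arc_coord (arc_inv v) = v.
Proof. unfold arc_inv; destruct constructive_indefinite_description; auto. Qed.

Lemma arc_inv_lt v w : v < w -> arc_inv v < arc_inv w.
Proof.
  intro H. destruct (Rlt_le_dec (arc_inv v) (arc_inv w)) as [|Hle]; auto.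
  apply arc_coord_le in Hle. rewrite !arc_coord_inv in Hle. lra.
Qed.

Lemma arc_inv_le v w : v <= w -> arc_inv v <= arc_inv w.
Proof. intro H. destruct (Rle_lt_or_eq_dec v w H) as [Hlt| <-]; [left; apply arc_inv_lt|]; lra. Qed.

Lemma arc_inv_period v : arc_inv (v + total_len) = arc_inv v + 1.
Proof. apply arc_coord_inj. rewrite arc_coord_period, !arc_coord_inv. auto. Qed.

Lemma arc_len_arc_inv v w : v <= w -> arc_len (arc_inv v) (arc_inv w) = w - v.
Proof.
  intro H. rewrite <- arc_coord_diff by (apply arc_inv_le; auto). rewrite !arc_coord_inv; auto.
Qed.

Lemma arc_inv_coord a : arc_inv (arc_coord a) = a.
Proof. apply arc_coord_inj, arc_coord_inv. Qed.

Lemma arc_inv_unit s : 0 <= s < 1 -> 0 <= arc_inv (total_len * s) < 1.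
Proof.
  intro Hs. pose proof total_len_pos.
  assert (E0 : arc_inv 0 = 0) by (pose proof (arc_inv_coord 0) as E; now rewrite arc_coord_0 in E).
  assert (E1 : arc_inv total_len = 1)
    by (pose proof (arc_inv_period 0) as P; rewrite Rplus_0_l, E0 in P; lra).
  split.
  - rewrite <- E0. apply arc_inv_le. nra.
  - rewrite <- E1. apply arc_inv_lt. nra.
Qed.

Definition const_speed u := f (arc_inv (total_len * u)).

Lemma arc_len_const_speed p q : p <= q ->
  arc_inv (total_len * p) <= arc_inv (total_len * q) /\
  arc_len (arc_inv (total_len * p)) (arc_inv (total_len * q)) = total_len * (q - p).
Proof.
  intro H. pose proof total_len_pos. split.
  - apply arc_inv_le; nra.
  - rewrite arc_len_arc_inv by nra. ring.
Qed.

Lemma arc_inv_wrap p q : q < p + 1 -> arc_inv (total_len * q) < arc_inv (total_len * p) + 1.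
Proof. intro H. rewrite <- arc_inv_period. apply arc_inv_lt. pose proof total_len_pos. nra. Qed.

Lemma const_speed_chord_le p q : p <= q ->
  vdist (const_speed q) (const_speed p) <= total_len * (q - p).
Proof. intro H. destruct (arc_len_const_speed p q H) as [H1 <-]. apply chord_le_arc_len; auto. Qed.

Lemma const_speed_chord_ge p q : p <= q -> q < p + 1 -> total_len * (q - p) < tau ->
  (1 - (total_len * (q - p) / tau) * (total_len * (q - p) / tau)) * (total_len * (q - p))
  <= vdist (const_speed q) (const_speed p).
Proof.
  intros H1 H2 H3. destruct (arc_len_const_speed p q H1) as [Hr HL]. rewrite <- HL.
  apply arc_len_chord_lower; auto; [apply arc_inv_wrap|]; lra.
Qed.

Lemma const_speed_subchord_dot u0 w p q : 0 <= w < 1 -> total_len * w < tau ->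
  u0 <= p -> p <= q -> q <= u0 + w ->
  (1 - (total_len * w / tau) * (total_len * w / tau)) *
    vdist (const_speed q) (const_speed p) * vdist (const_speed (u0 + w)) (const_speed u0) <=
  vdot (vsub (const_speed q) (const_speed p)) (vsub (const_speed (u0 + w)) (const_speed u0)).
Proof.
  intros Hw Hwt H1 H2 H3.
  destruct (arc_len_const_speed u0 (u0 + w) ltac:(lra)) as [Hr HL].
  replace (total_len * w) with (arc_len (arc_inv (total_len * u0)) (arc_inv (total_len * (u0 + w))))
    by (rewrite HL; ring).
  apply subchord_dot_ge.
  - apply arc_inv_wrap; lra.
  - apply near_ends_arc_len; auto.
  - rewrite HL. replace (u0 + w - u0) with w by ring. auto.
  - apply (arc_len_const_speed u0 p H1).
  - apply (arc_len_const_speed p q H2).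
  - apply (arc_len_const_speed q (u0 + w) H3).
Qed.

Definition slope p q := vscale (/ (q - p)) (vsub (const_speed q) (const_speed p)).

Lemma slope_sym p q : slope p q = slope q p.
Proof.
  destruct (Req_dec p q) as [<-|N]; auto.
  unfold slope, vscale, vsub, px, py, pz; simpl. f_equal; [f_equal|]; field; lra.
Qed.

Lemma slope_norm p q : p < q ->
  vnorm (slope p q) = vdist (const_speed q) (const_speed p) / (q - p).
Proof.
  intro H. unfold slope. rewrite vnorm_scale, Rabs_pos_eq by (left; apply Rinv_0_lt_compat; lra).
  unfold vdist, Rdiv; ring.
Qed.

Definition window_width := Rmin (1 / 2) (tau / (2 * total_len)).

Lemma window_width_spec : 0 < window_width /\ window_width <= 1 / 2 /\
  forall w, 0 <= w <= window_width -> total_len * w / tau <= 1 / 2.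
Proof.
  pose proof total_len_pos. unfold window_width.
  pose proof (Rmin_l (1 / 2) (tau / (2 * total_len))).
  pose proof (Rmin_r (1 / 2) (tau / (2 * total_len))).
  split; [apply Rmin_glb_lt; [lra|apply Rdiv_lt_0_compat; lra]|split; auto].
  intros w Hw. apply Rle_div_l; [lra|].
  apply Rle_trans with (total_len * (tau / (2 * total_len))); [apply Rmult_le_compat_l; lra|].
  right; field; lra.
Qed.

Section Window.

Variables (u0 w : R).
Hypothesis w_pos : 0 < w.
Hypothesis w_small : w <= window_width.

Lemma window_ratio : 0 <= total_len * w / tau <= 1 / 2 /\ total_len * w < tau /\ w < 1.
Proof.
  destruct window_width_spec as [_ [H1 H2]]. pose proof total_len_pos.
  specialize (H2 w ltac:(lra)).
  assert (0 <= total_len * w / tau) by (apply Rdiv_le_0_compat; [apply Rmult_le_pos|]; lra).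
  repeat split; try lra.
  replace (total_len * w) with (total_len * w / tau * tau) by (field; lra).
  apply Rle_lt_trans with (1 / 2 * tau); [apply Rmult_le_compat_r|]; lra.
Qed.

Lemma slope_norm_bounds p q : u0 <= p -> p < q -> q <= u0 + w ->
  (1 - (total_len * w / tau) * (total_len * w / tau)) * total_len <= vnorm (slope p q) <= total_len.
Proof.
  intros H1 H2 H3. destruct window_ratio as [Hs [Hwt Hw1]]. pose proof total_len_pos.
  rewrite slope_norm by auto.
  split; apply Rmult_le_reg_r with (q - p); try lra;
    replace (vdist (const_speed q) (const_speed p) / (q - p) * (q - p))
      with (vdist (const_speed q) (const_speed p)) by (field; lra).
  - eapply Rle_trans; [|apply const_speed_chord_ge; nra]. rewrite Rmult_assoc.
    assert (Hs' : 0 <= total_len * (q - p) / tau <= total_len * w / tau).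
    { split; [apply Rdiv_le_0_compat; [apply Rmult_le_pos|]; lra|].
      apply Rmult_le_compat_r; [left; apply Rinv_0_lt_compat|apply Rmult_le_compat_l]; lra. }
    revert Hs Hs'. generalize (total_len * w / tau) (total_len * (q - p) / tau).
    intros s s' Hs Hs'. assert (s' * s' <= s * s) by (apply Rmult_le_compat; lra).
    apply Rmult_le_compat_r; [apply Rmult_le_pos|]; lra.
  - apply const_speed_chord_le; lra.
Qed.

Lemma slope_dot_window p q : u0 <= p -> p < q -> q <= u0 + w ->
  (1 - (total_len * w / tau) * (total_len * w / tau)) *
    vnorm (slope p q) * vnorm (slope u0 (u0 + w)) <= vdot (slope p q) (slope u0 (u0 + w)).
Proof.
  intros H1 H2 H3. destruct window_ratio as [_ [Hwt Hw1]].
  pose proof (const_speed_subchord_dot u0 w p q ltac:(lra) Hwt H1 ltac:(lra) H3) as D.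
  rewrite !slope_norm by lra. unfold slope. rewrite vdot_scale.
  replace (u0 + w - u0) with w by ring.
  assert (Hpos : 0 < / (q - p) * / w)
    by (apply Rmult_lt_0_compat; apply Rinv_0_lt_compat; lra).
  set (k := 1 - (total_len * w / tau) * (total_len * w / tau)) in *.
  set (dpq := vdist (const_speed q) (const_speed p)) in *.
  set (dw := vdist (const_speed (u0 + w)) (const_speed u0)) in *.
  replace (k * (dpq / (q - p)) * (dw / w)) with (/ (q - p) * / w * (k * dpq * dw)) by (field; lra).
  apply Rmult_le_compat_l; lra.
Qed.

Lemma slope_near_window p q : u0 <= p -> p < q -> q <= u0 + w ->
  vdist (slope p q) (slope u0 (u0 + w)) <= 2 * (total_len * w / tau) * total_len.
Proof.
  intros H1 H2 H3. destruct window_ratio as [Hs _]. pose proof total_len_pos.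
  pose proof (slope_norm_bounds p q H1 H2 H3) as BX.
  pose proof (slope_norm_bounds u0 (u0 + w) ltac:(lra) ltac:(lra) ltac:(lra)) as BY.
  pose proof (slope_dot_window p q H1 H2 H3) as D.
  apply le_of_sq_le; [apply Rmult_le_pos; [apply Rmult_le_pos|]; lra|].
  unfold vdist. rewrite vnorm_vsub_sq.
  apply near_parallel_sq_bound; lra.
Qed.

Lemma slope_norm_ge_linear p q : u0 <= p -> p < q -> q <= u0 + w ->
  total_len - total_len * total_len / (2 * tau) * w <= vnorm (slope p q).
Proof.
  intros H1 H2 H3. destruct window_ratio as [Hs _]. pose proof total_len_pos.
  pose proof (slope_norm_bounds p q H1 H2 H3) as [B _].
  assert (E : (total_len * w / tau) * (total_len * w / tau) * total_len
              <= total_len * total_len / (2 * tau) * w).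
  { apply Rle_trans with (1 / 2 * (total_len * w / tau) * total_len).
    - apply Rmult_le_compat_r; [lra|]. apply Rmult_le_compat_r; lra.
    - right; field; lra. }
  lra.
Qed.

End Window.

Definition slope_lip := 4 * total_len * total_len / tau.

Lemma slope_lip_pos : 0 < slope_lip.
Proof.
  pose proof total_len_pos. unfold slope_lip.
  apply Rdiv_lt_0_compat; [apply Rmult_lt_0_compat; [apply Rmult_lt_0_compat|]|]; lra.
Qed.

Lemma slopes_close u0 w p q p' q' : 0 < w -> w <= window_width ->
  u0 <= p -> p < q -> q <= u0 + w -> u0 <= p' -> p' < q' -> q' <= u0 + w ->
  vdist (slope p q) (slope p' q') <= slope_lip * w.
Proof.
  intros. pose proof total_len_pos.
  eapply Rle_trans; [apply (vdist_triangle _ (slope u0 (u0 + w)))|].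
  rewrite (vdist_sym (slope u0 (u0 + w))).
  replace (slope_lip * w) with
    (2 * (total_len * w / tau) * total_len + 2 * (total_len * w / tau) * total_len)
    by (unfold slope_lip; field; lra).
  apply Rplus_le_compat; apply slope_near_window; auto.
Qed.

Lemma slope_centered t h : h <> 0 ->
  slope t (t + h) = slope (Rmin t (t + h)) (Rmax t (t + h)) /\
  Rmin t (t + h) < Rmax t (t + h) /\
  t - Rabs h <= Rmin t (t + h) /\ Rmax t (t + h) <= t + Rabs h.
Proof.
  intro Hh. unfold Rmin, Rmax, Rabs.
  destruct Rle_dec, Rcase_abs; repeat split; try lra; auto using slope_sym.
Qed.

Lemma slopes_close_at t h h' : 0 < Rabs h' <= Rabs h -> Rabs h <= window_width / 2 ->
  vdist (slope t (t + h)) (slope t (t + h')) <= 2 * slope_lip * Rabs h.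
Proof.
  intros Hh' Hh.
  assert (h <> 0) by (intro E; subst; rewrite Rabs_R0 in *; lra).
  assert (h' <> 0) by (intro E; subst; rewrite Rabs_R0 in *; lra).
  destruct (slope_centered t h) as [-> [B1 [B2 B3]]]; auto.
  destruct (slope_centered t h') as [-> [B1' [B2' B3']]]; auto.
  replace (2 * slope_lip * Rabs h) with (slope_lip * (2 * Rabs h)) by ring.
  apply (slopes_close (t - Rabs h)); lra.
Qed.

Lemma velocity_exists t : exists v, forall h, 0 < Rabs h <= window_width / 2 ->
  vdist (slope t (t + h)) v <= 3 * (2 * slope_lip) * Rabs h.
Proof.
  destruct window_width_spec as [Hw _]. pose proof slope_lip_pos.
  apply (point_limit_at_0 (fun h => slope t (t + h))); [lra|lra|].
  intros h h' Hh' Hh. apply slopes_close_at; auto.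
Qed.

Definition velocity t := proj1_sig (constructive_indefinite_description _ (velocity_exists t)).

Lemma slope_velocity t h : 0 < Rabs h <= window_width / 2 ->
  vdist (slope t (t + h)) (velocity t) <= 6 * slope_lip * Rabs h.
Proof.
  intro Hh. unfold velocity. destruct constructive_indefinite_description as [v Hv]; simpl.
  replace (6 * slope_lip) with (3 * (2 * slope_lip)) by ring. auto.
Qed.

Lemma slope_velocity_right t h : 0 < h <= window_width / 2 ->
  vdist (slope t (t + h)) (velocity t) <= 6 * slope_lip * h.
Proof.
  intro Hh. rewrite <- (Rabs_pos_eq h) at 2 by lra.
  apply slope_velocity. rewrite Rabs_pos_eq; lra.
Qed.

Lemma const_speed_derive_coord (pr : point -> R) t :
  (forall a X, pr (vscale a X) = a * pr X) -> (forall X Y, pr (vsub X Y) = pr X - pr Y) ->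
  (forall X Y, Rabs (pr X - pr Y) <= vdist X Y) ->
  is_derive (fun u => pr (const_speed u)) t (pr (velocity t)).
Proof.
  intros Hscale Hsub Hle. destruct window_width_spec as [Hw _]. pose proof slope_lip_pos.
  apply (is_derive_of_quotient_bound _ _ _ (6 * slope_lip) (window_width / 2)); [lra|lra|].
  intros h Hh0 Hh.
  replace ((pr (const_speed (t + h)) - pr (const_speed t)) / h) with (pr (slope t (t + h))).
  - eapply Rle_trans; [apply Hle|]. apply slope_velocity.
    split; [apply Rabs_pos_lt|]; lra.
  - unfold slope. rewrite Hscale, Hsub. replace (t + h - t) with h by ring.
    unfold Rdiv; ring.
Qed.

Lemma velocity_norm t : vnorm (velocity t) = total_len.
Proof.
  destruct window_width_spec as [Hw _]. pose proof total_len_pos. pose proof slope_lip_pos.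
  assert (Near : forall h, 0 < h <= window_width / 2 ->
    Rabs (vnorm (slope t (t + h)) - vnorm (velocity t)) <= 6 * slope_lip * h).
  { intros h Hh. eapply Rle_trans; [apply vnorm_lipschitz|]. apply slope_velocity_right; auto. }
  assert (Hc : 0 <= total_len * total_len / (2 * tau)) by (apply Rdiv_le_0_compat; nra).
  apply Rle_antisym;
    [apply (Rle_of_le_plus_linear _ _ (6 * slope_lip) (window_width / 2)) |
     apply (Rle_of_le_plus_linear _ _ (6 * slope_lip + total_len * total_len / (2 * tau))
              (window_width / 2))]; try lra;
    intros h Hh; specialize (Near h Hh); apply Rabs_le_between in Near.
  - pose proof (slope_norm_bounds t h ltac:(lra) ltac:(lra) t (t + h)); lra.
  - pose proof (slope_norm_ge_linear t h ltac:(lra) ltac:(lra) t (t + h)); lra.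
Qed.

Lemma velocity_close u u' : u < u' -> u' - u <= window_width / 2 ->
  vdist (velocity u) (velocity u') <= slope_lip * (u' - u).
Proof.
  intros H1 H2. destruct window_width_spec as [Hw _]. pose proof slope_lip_pos.
  apply (Rle_of_le_plus_linear _ _ (13 * slope_lip) (window_width / 2)); [lra|lra|].
  intros h Hh.
  assert (K : vdist (slope u (u + h)) (slope u' (u' + h)) <= slope_lip * (u' - u + h))
    by (apply (slopes_close u); lra).
  pose proof (vdist_triangle (velocity u) (slope u (u + h)) (velocity u')).
  pose proof (vdist_triangle (slope u (u + h)) (slope u' (u' + h)) (velocity u')).
  pose proof (slope_velocity_right u h Hh); pose proof (slope_velocity_right u' h Hh).
  rewrite (vdist_sym (velocity u) (slope u (u + h))) in *. lra.
Qed.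

Lemma velocity_lipschitz :
  exists K, forall s t, vdist (velocity s) (velocity t) <= K * Rabs (s - t).
Proof.
  destruct window_width_spec as [Hw _]. pose proof slope_lip_pos. pose proof total_len_pos.
  exists (slope_lip + 4 * total_len / window_width).
  assert (Hc : 0 <= 4 * total_len / window_width) by (apply Rdiv_le_0_compat; lra).
  assert (Ordered : forall u u', u <= u' -> vdist (velocity u) (velocity u') <=
                                           (slope_lip + 4 * total_len / window_width) * (u' - u)).
  { intros u u' Hu. destruct (Rle_lt_or_eq_dec u u' Hu) as [Hlt| <-].
    - destruct (Rle_dec (u' - u) (window_width / 2)).
      + pose proof (velocity_close u u' Hlt r). nra.
      + pose proof (vdist_le_vnorm_add (velocity u) (velocity u')) as T.
        rewrite !velocity_norm in T.
        assert (2 * total_len <= 4 * total_len / window_width * (u' - u)).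
        { replace (4 * total_len / window_width * (u' - u))
            with (2 * total_len * ((u' - u) / (window_width / 2))) by (field; lra).
          assert (1 <= (u' - u) / (window_width / 2)) by (apply Rle_div_r; lra).
          nra. }
        nra.
    - rewrite vdist_xx. lra. }
  intros s t. destruct (Rle_dec s t).
  - rewrite Rabs_left1 by lra. replace (- (s - t)) with (t - s) by ring. auto.
  - rewrite Rabs_pos_eq by lra. rewrite vdist_sym. apply Ordered; lra.
Qed.

Lemma curve_C11 : component_C11 f.
Proof.
  pose proof total_len_pos.
  exists const_speed, velocity. split; [|split; [|split; [|split; [|split]]]].
  - intro t. unfold const_speed. rewrite Rmult_plus_distr_l, Rmult_1_r, arc_inv_period, f_per. auto.
  - intros s t Hs Ht E. apply f_inj in E; try apply arc_inv_unit; auto.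
    apply (f_equal arc_coord) in E. rewrite !arc_coord_inv in E. nra.
  - intro x. split.
    + intros [s ->]. exists (arc_coord s / total_len). unfold const_speed.
      replace (total_len * (arc_coord s / total_len)) with (arc_coord s) by (field; lra).
      now rewrite arc_inv_coord.
    + intros [t ->]. exists (arc_inv (total_len * t)). auto.
  - intro t. split; [|split]; apply const_speed_derive_coord; intros; try reflexivity;
      apply coord_sub_le_vdist.
  - exists total_len. apply velocity_norm.
  - apply velocity_lipschitz.
Qed.

End Curve.

Theorem lemma4 (n : nat) (g : nat -> R -> point) (tau : R) :
  is_link n g ->
  thickness n g = Finite tau ->
  0 < tau ->
  (forall (i j : nat) (s s' t t' : R),
      (i < n)%nat -> (j < n)%nat ->
      0 <= s < 1 -> 0 <= s' < 1 -> 0 <= t < 1 -> 0 <= t' < 1 ->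
      g i s <> g j t -> g i s' <> g j t' ->
      Rbar_le (Finite (rp2_dist (secant (g i s) (g j t)) (secant (g i s') (g j t'))))
              (Rbar_mult (Finite (/ (2 * tau)))
                         (Rbar_plus (arc_dist (g i) s s') (arc_dist (g j) t t')))) /\
  (forall i, (i < n)%nat -> component_C11 (g i)).
Proof.
  intros [Hcomp _] Hthickness Htau.
  assert (Hthick : thick (on_link n g) tau)
    by (apply thickness_thick; rewrite Hthickness; apply Rbar_le_refl).
  split.
  - intros i j s s' t t' Hi Hj Hs Hs' Ht Ht' N N'.
    destruct (Hcomp i Hi) as [_ [Pi _]], (Hcomp j Hj) as [_ [Pj _]].
    apply (Rbar_le_mult_plus _ (vdist (g i s) (g i s')) (vdist (g j t) (g j t'))).
    + apply Rinv_0_lt_compat; lra.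
    + rewrite Rmult_comm. apply (secant_lipschitz (on_link n g) tau); auto;
        unfold on_link; eauto.
    + apply chord_le_arc_dist; auto. apply Rabs_le_between; lra.
    + apply chord_le_arc_dist; auto. apply Rabs_le_between; lra.
  - intros i Hi. destruct (Hcomp i Hi) as [Hc [Hper Hinj]].
    apply (curve_C11 (g i) tau); auto.
    apply (thick_sub _ (on_link n g)); auto. intros x [s ->]. exists i, s; auto.
Qed.
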